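(* Let $(\mathbf w,\mathbf b)$ be weights and biases of a PNN with architecture $(\mathbf d,\mathbf r)$, and let $\widetilde{\mathbf w}=(\widetilde W_1,\dots,\widetilde W_L)$ with $\widetilde W_\ell=\begin{bmatrix}W_\ell&\mathbf b_\ell\\0&1\end{bmatrix}$ for $\ell<L$ and $\widetilde W_L=\begin{bmatrix}W_L&\mathbf b_L\end{bmatrix}$. If the hPNN representation $p_{\widetilde{\mathbf w}}$ with architecture $((d_0+1,\dots,d_{L-1}+1,d_L),\mathbf r)$ is unique (as an hPNN, among all unstructured weight tuples of that architecture), then the PNN representation $p_{\mathbf w,\mathbf b}$ is unique.
   Context: Work over $\mathbb R$. $\rho_r(z_1,\dots,z_d)=(z_1^r,\dots,z_d^r)$. A PNN with architecture $(\mathbf d,\mathbf r)$, $\mathbf d=(d_0,\dots,d_L)$, $\mathbf r=(r_1,\dots,r_{L-1})$, weights $W_\ell\in\mathbb R^{d_\ell\times d_{\ell-1}}$ and biases $\mathbf b_\ell\in\mathbb R^{d_\ell}$ is $p_{\mathbf w,\mathbf b}=f_L\circ\rho_{r_{L-1}}\circ\cdots\circ\rho_{r_1}\circ f_1$, $f_\ell(\mathbf x)=W_\ell\mathbf x+\mathbf b_\ell$; an hPNN $p_{\mathbf w}$ is the case of zero biases. Two parameter sets are equivalent if there exist permutation matrices $P_\ell$ and invertible diagonal matrices $D_\ell$ ($\ell=1,\dots,L-1$), $P_0=D_0=P_L=D_L=I$, with $W'_\ell=P_\ell D_\ell W_\ell D_{\ell-1}^{-r_{\ell-1}}P_{\ell-1}^T$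 ($D_0^{-r_0}:=I$) and $\mathbf b'_\ell=P_\ell D_\ell\mathbf b_\ell$ for all $\ell$ (for hPNNs, only the weight condition). A (h)PNN representation is unique if every parameter set of the same architecture defining the same function is equivalent to it. *)

From HB Require Import structures.
From mathcomp Require Import all_boot all_order all_algebra.
From mathcomp Require Import reals.
Set Implicit Arguments. Unset Strict Implicit. Unset Printing Implicit Defensive.
Import Order.TTheory GRing.Theory Num.Theory.
Local Open Scope ring_scope.

(* Conventions:
   - layer widths  d : nat -> nat, d 0 .. d L  (paper d_0..d_L);
   - exponents     r : nat -> nat, r l = paper r_l (applied after paper layer l,
     for 1 <= l <= L-1);
   - weights       W l : 'M_(d l.+1, d l) = paper W_{l+1}, for l < L;
   - biases        b l : 'cV_(d l.+1)      = paper b_{l+1}, for l < L.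
   Values of W, b at l >= L are irrelevant. *)

Section PNN.
Variable R : realType.

Definition rho (r : nat) n (v : 'cV[R]_n) : 'cV[R]_n := map_mx (fun z => z ^+ r) v.

Fixpoint pre (d r : nat -> nat) (W : forall l, 'M[R]_(d l.+1, d l))
  (b : forall l, 'cV[R]_(d l.+1)) (x : 'cV[R]_(d 0)) (k : nat) : 'cV[R]_(d k.+1) :=
  match k return 'cV[R]_(d k.+1) with
  | 0 => W 0 *m x + b 0
  | k'.+1 => W k'.+1 *m rho (r k'.+1) (pre r W b x k') + b k'.+1
  end.

(* the PNN p_{w,b} : R^{d_0} -> R^{d_L}, for L >= 1 *)
Definition pnn (d r : nat -> nat) (L : nat) (W : forall l, 'M[R]_(d l.+1, d l))
  (b : forall l, 'cV[R]_(d l.+1)) : 'cV[R]_(d 0) -> 'cV[R]_(d L.-1.+1) :=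
  fun x => pre r W b x L.-1.

Definition hpnn (d r : nat -> nat) (L : nat) (W : forall l, 'M[R]_(d l.+1, d l)) :=
  pnn r L W (fun l => 0).

Definition equiv_data (d : nat -> nat) (L : nat)
  (P : forall l, 'M[R]_(d l)) (D : forall l, 'rV[R]_(d l)) : Prop :=
  [/\ (forall l, (0 < l < L)%N -> is_perm_mx (P l) /\ (forall i, D l 0 i != 0)),
      P 0%N = 1%:M, P L = 1%:M, D 0%N = const_mx 1 & D L = const_mx 1].

(* W'_l = P_l D_l W_l D_{l-1}^{-r_{l-1}} P_{l-1}^T  (paper indexing) *)
Definition weights_rel (d r : nat -> nat) (L : nat)
  (P : forall l, 'M[R]_(d l)) (D : forall l, 'rV[R]_(d l))
  (W W' : forall l, 'M[R]_(d l.+1, d l)) : Prop :=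
  forall l, (l < L)%N ->
    W' l = P l.+1 *m diag_mx (D l.+1) *m W l
             *m diag_mx (map_mx (fun z => z ^- r l) (D l)) *m (P l)^T.

Definition biases_rel (d : nat -> nat) (L : nat)
  (P : forall l, 'M[R]_(d l)) (D : forall l, 'rV[R]_(d l))
  (b b' : forall l, 'cV[R]_(d l.+1)) : Prop :=
  forall l, (l < L)%N -> b' l = P l.+1 *m diag_mx (D l.+1) *m b l.

Definition pnn_equiv (d r : nat -> nat) (L : nat)
  (W : forall l, 'M[R]_(d l.+1, d l)) (b : forall l, 'cV[R]_(d l.+1))
  (W' : forall l, 'M[R]_(d l.+1, d l)) (b' : forall l, 'cV[R]_(d l.+1)) : Prop :=
  exists P D, [/\ equiv_data L P D, weights_rel r L P D W W' & biases_rel L P D b b'].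

Definition hpnn_equiv (d r : nat -> nat) (L : nat)
  (W W' : forall l, 'M[R]_(d l.+1, d l)) : Prop :=
  exists P D, equiv_data L P D /\ weights_rel r L P D W W'.

Definition pnn_unique (d r : nat -> nat) (L : nat)
  (W : forall l, 'M[R]_(d l.+1, d l)) (b : forall l, 'cV[R]_(d l.+1)) : Prop :=
  forall W' b', pnn r L W' b' =1 pnn r L W b -> pnn_equiv r L W b W' b'.

Definition hpnn_unique (d r : nat -> nat) (L : nat)
  (W : forall l, 'M[R]_(d l.+1, d l)) : Prop :=
  forall W', hpnn r L W' =1 hpnn r L W -> hpnn_equiv r L W W'.

(* nat-indexed entry of a matrix (0 outside the range) *)
Definition entry m n (A : 'M[R]_(m, n)) (i j : nat) : R :=
  match @insub _ (fun k => k < m)%N 'I_m i, @insub _ (fun k => k < n)%N 'I_n j with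
  | Some i', Some j' => A i' j'
  | _, _ => 0
  end.

Definition aug_dims (d : nat -> nat) (L : nat) : nat -> nat :=
  fun l => if (l < L)%N then (d l).+1 else d l.

(* augmented weights: [[W_l, b_l]; [0, 1]] for l < L, and [W_L, b_L] for the
   last layer (the last row is absent there since aug_dims L = d L). *)
Definition aug_weights (d : nat -> nat) (L : nat)
  (W : forall l, 'M[R]_(d l.+1, d l)) (b : forall l, 'cV[R]_(d l.+1)) :
  forall l, 'M[R]_(aug_dims d L l.+1, aug_dims d L l) :=
  fun l => \matrix_(i, j)
    if (i < d l.+1)%N then
      (if (j < d l)%N then entry (W l) i j else entry (b l) i 0%N)
    else (if j == d l :> nat then 1 else 0).

End PNN.

From mathcomp Require Import all_boot all_order all_algebra.
From mathcomp Require Import fingroup perm reals.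
Set Implicit Arguments. Unset Strict Implicit. Unset Printing Implicit Defensive.
Import Order.TTheory GRing.Theory Num.Theory.
Local Open Scope ring_scope.

(* Feeding (x; 1) to the augmented homogeneous network reproduces the PNN
   layer by layer, the constant 1 being carried by the extra neurons.  The
   hPNN is homogeneous in its input and polynomial along lines, so two PNNs
   with the same function have augmented hPNNs with the same function, and
   uniqueness yields permutations P_l and scalings D_l relating the augmented
   weights.  These fix the constant neuron of every hidden layer with scaling
   1: otherwise it would be sent to a neuron whose incoming weights are a
   nonzero multiple of those of the constant neuron, and merging the two
   neurons would give a representation of the same function with fewer
   nonzero weights, which no equivalent representation has.  Restricting P_l
   and D_l to the remaining neurons relates (W, b) and (W', b'). *)

Section Entry.
Variable R : realType.

Lemma entry_in m n (A : 'M[R]_(m, n)) i j (hi : (i < m)%N) (hj : (j < n)%N) :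
  entry A i j = A (Ordinal hi) (Ordinal hj).
Proof. by rewrite /entry !insubT. Qed.

Lemma entryE m n (A : 'M[R]_(m, n)) (i : 'I_m) (j : 'I_n) : entry A i j = A i j.
Proof. by rewrite /entry !valK. Qed.

Lemma entry_out m n (A : 'M[R]_(m, n)) i j :
  ~~ ((i < m) && (j < n))%N -> entry A i j = 0.
Proof.
rewrite /entry negb_and => /orP[hi|hj]; first by rewrite insubN.
by case: insub => // ?; rewrite insubN.
Qed.

Lemma entry_ext m n (A B : 'M[R]_(m, n)) :
  (forall i j, entry A i j = entry B i j) -> A = B.
Proof. by move=> AB; apply/matrixP => i j; rewrite -!entryE. Qed.

Lemma entry_mx m n (F : 'I_m -> 'I_n -> R) (G : nat -> nat -> R) i j :
  (forall (i : 'I_m) (j : 'I_n), F i j = G i j) ->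
  entry (\matrix_(i, j) F i j) i j = if ((i < m) && (j < n))%N then G i j else 0.
Proof.
move=> FG; have [/andP[hi hj]|h] := boolP ((i < m) && (j < n))%N.
  by rewrite (entry_in _ hi hj) mxE FG.
by rewrite entry_out.
Qed.

Lemma entry_add m n (A B : 'M[R]_(m, n)) i j :
  entry (A + B) i j = entry A i j + entry B i j.
Proof.
have [/andP[hi hj]|h] := boolP ((i < m) && (j < n))%N.
  by rewrite !(entry_in _ hi hj) mxE.
by rewrite !entry_out // addr0.
Qed.

Lemma entry_scale m n (A : 'M[R]_(m, n)) a i j : entry (a *: A) i j = a * entry A i j.
Proof.
have [/andP[hi hj]|h] := boolP ((i < m) && (j < n))%N.
  by rewrite !(entry_in _ hi hj) mxE.
by rewrite !entry_out // mulr0.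
Qed.

Lemma entry_mul m n p (A : 'M[R]_(m, n)) (B : 'M[R]_(n, p)) i k :
  entry (A *m B) i k = \sum_(0 <= j < n) entry A i j * entry B j k.
Proof.
have [/andP[hi hk]|h] := boolP ((i < m) && (k < p))%N.
  rewrite (entry_in _ hi hk) mxE big_mkord; apply: eq_bigr => j _.
  by rewrite -[i]/(val (Ordinal hi)) -[k]/(val (Ordinal hk)) !entryE.
rewrite entry_out // big1_seq // => j _; move: h; rewrite negb_and => /orP[h|h].
  by rewrite (@entry_out _ _ A) ?mul0r // negb_and h.
by rewrite (@entry_out _ _ B) ?mulr0 // negb_and h orbT.
Qed.

Lemma entry_rho r n (v : 'cV[R]_n) i :
  entry (rho r v) i 0 = if (i < n)%N then entry v i 0 ^+ r else 0.
Proof.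
case: ifP => hi; last by rewrite entry_out // hi.
by rewrite !(entry_in _ hi (ltn0Sn 0)) mxE.
Qed.

End Entry.

Section HomogeneousNetwork.
Variable T : comNzRingType.
Variables d r : nat -> nat.

Fixpoint hdeg (k : nat) : nat := if k is k'.+1 then (hdeg k' * r k)%N else 1%N.

Fixpoint hpre (W : forall l, 'M[T]_(d l.+1, d l)) (x : 'cV[T]_(d 0)) (k : nat) :
    'cV[T]_(d k.+1) :=
  match k return 'cV[T]_(d k.+1) with
  | 0 => W 0 *m x
  | k'.+1 => W k'.+1 *m map_mx (fun z => z ^+ r k'.+1) (hpre W x k')
  end.

Lemma eq_hpre (W1 W2 : forall l, 'M[T]_(d l.+1, d l)) x k :
  (forall l, W1 l = W2 l) -> hpre W1 x k = hpre W2 x k.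
Proof. by move=> W12; elim: k => [|k IH] /=; rewrite W12 ?IH. Qed.

Lemma hpreZ (W : forall l, 'M[T]_(d l.+1, d l)) t x k :
  hpre W (t *: x) k = t ^+ hdeg k *: hpre W x k.
Proof.
elim: k => [|k IH] /=; first by rewrite expr1 scalemxAr.
rewrite IH scalemxAr; congr (_ *m _).
by apply/matrixP => i j; rewrite !mxE exprMn exprM.
Qed.

End HomogeneousNetwork.

Lemma map_hpre (T S : comNzRingType) (f : {rmorphism T -> S}) d r
    (W : forall l, 'M[T]_(d l.+1, d l)) x k :
  map_mx f (hpre r W x k) = hpre r (fun l => map_mx f (W l)) (map_mx f x) k.
Proof.
elim: k => [|k IH] /=; first by rewrite map_mxM.
rewrite map_mxM -IH; congr (_ *m _).
by apply/matrixP => i j; rewrite !mxE rmorphXn.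
Qed.

Lemma poly_eq0_off_point (R : numDomainType) (q : {poly R}) t0 :
  (forall t, t != t0 -> q.[t] = 0) -> q = 0.
Proof.
move=> q0; apply: (@roots_geq_poly_eq0 _ _ [seq i.+1%:R + t0 | i <- iota 0 (size q)]).
- apply/allP => _ /mapP[i _ ->]; apply/rootP/q0.
  by rewrite -subr_eq0 addrK pnatr_eq0.
- by rewrite map_inj_uniq ?iota_uniq // => i j /addIr /eqP; rewrite eqr_nat => /eqP[].
- by rewrite size_map size_iota.
Qed.

Section Hpnn.
Variable R : realType.
Variables (d r : nat -> nat) (L : nat).

Lemma pre0_hpre (W : forall l, 'M[R]_(d l.+1, d l)) x k :
  pre r W (fun=> 0) x k = hpre r W x k.
Proof. by elim: k => [|k IH] /=; rewrite addr0 // IH. Qed.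

Lemma hpnnZ (W : forall l, 'M[R]_(d l.+1, d l)) t x :
  hpnn r L W (t *: x) = t ^+ hdeg r L.-1 *: hpnn r L W x.
Proof. by rewrite /hpnn /pnn !pre0_hpre hpreZ. Qed.

Lemma hpnn_line_poly (W : forall l, 'M[R]_(d l.+1, d l)) (u w : 'cV[R]_(d 0)) :
  exists Q : 'cV[{poly R}]_(d L.-1.+1),
    forall t, hpnn r L W (u + t *: w) = map_mx (horner_eval t) Q.
Proof.
exists (hpre r (fun l => map_mx polyC (W l))
          (map_mx polyC u + 'X *: map_mx polyC w) L.-1) => t.
rewrite map_hpre /hpnn /pnn pre0_hpre.
have -> : map_mx (horner_eval t) (map_mx polyC u + 'X *: map_mx polyC w) = u + t *: w.
  by apply/matrixP => i j; rewrite !mxE /= horner_evalE hornerD hornerM hornerX !hornerC.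
by apply: eq_hpre => l; apply/matrixP => i j; rewrite !mxE /= horner_evalE hornerC.
Qed.

(* Along the line through v in the direction of the c-th basis vector, both
   networks are polynomial and agree at all but one point. *)
Lemma hpnn_eq_off_hyperplane (W1 W2 : forall l, 'M[R]_(d l.+1, d l)) (c : 'I_(d 0)) :
  (forall v : 'cV[R]_(d 0), v c 0 != 0 -> hpnn r L W1 v = hpnn r L W2 v) ->
  hpnn r L W1 =1 hpnn r L W2.
Proof.
move=> W12 v; pose w : 'cV[R]_(d 0) := delta_mx c 0.
have [Q1 HQ1] := hpnn_line_poly W1 v w; have [Q2 HQ2] := hpnn_line_poly W2 v w.
suff Q12 : Q1 = Q2 by rewrite -[v]addr0 -(scale0r w) HQ1 HQ2 Q12.
apply/matrixP => i j; apply/subr0_eq/(poly_eq0_off_point (t0 := - v c 0)) => t ht.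
have /matrixP/(_ i j) : hpnn r L W1 (v + t *: w) = hpnn r L W2 (v + t *: w).
  by apply: W12; rewrite !mxE eqxx mulr1 addrC addr_eq0.
by rewrite HQ1 HQ2 !mxE /= !horner_evalE hornerD hornerN => ->; rewrite subrr.
Qed.

End Hpnn.

Section Augmented.
Variable R : realType.
Variables (d r : nat -> nat) (L : nat).
Implicit Types (W : forall l, 'M[R]_(d l.+1, d l)) (b : forall l, 'cV[R]_(d l.+1)).

Local Notation n := (aug_dims d L).

Definition aug_entry W b l (i j : nat) : R :=
  if (i < d l.+1)%N then (if (j < d l)%N then entry (W l) i j else entry (b l) i 0%N)
  else (if j == d l then 1 else 0).

Lemma entry_aug W b l i j :
  entry (aug_weights L W b l) i j =
  if ((i < n l.+1) && (j < n l))%N then aug_entry W b l i j else 0.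
Proof. exact: entry_mx. Qed.

Lemma aug_dims_lt l : (l < L)%N -> n l = (d l).+1.
Proof. by rewrite /aug_dims => ->. Qed.

Lemma ltn_aug_dims l i : (i < d l)%N -> (i < n l)%N.
Proof. by rewrite /aug_dims; case: ifP => // _ /ltnW. Qed.

Lemma entry_aug_weights W b l i j : (i < d l.+1)%N -> (j < d l)%N ->
  entry (aug_weights L W b l) i j = entry (W l) i j.
Proof. by move=> hi hj; rewrite entry_aug !ltn_aug_dims // /aug_entry hi hj. Qed.

Lemma entry_aug_bias W b l i : (l < L)%N -> (i < d l.+1)%N ->
  entry (aug_weights L W b l) i (d l) = entry (b l) i 0.
Proof.
move=> hl hi; rewrite entry_aug ltn_aug_dims // aug_dims_lt // ltnSn.
by rewrite /aug_entry hi ltnn.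
Qed.

Lemma aug_layerE W b l (hl : (l < L)%N) (y : 'cV[R]_(n l)) (z : 'cV[R]_(d l)) :
  (forall j, (j < d l)%N -> entry y j 0 = entry z j 0) -> entry y (d l) 0 = 1 ->
  forall i, entry (aug_weights L W b l *m y) i 0 =
    if (i < d l.+1)%N then entry (W l *m z + b l) i 0
    else if (i == d l.+1) && (l.+1 < L)%N then 1 else 0.
Proof.
move=> yz y1 i; have nl := aug_dims_lt hl.
have ni : (i < n l.+1)%N = (i < d l.+1)%N || ((i == d l.+1) && (l.+1 < L)%N).
  rewrite /aug_dims; case: ifP => _; last by rewrite andbF orbF.
  by rewrite andbT ltnS leq_eqVlt orbC.
have lt_nl j : (j <= d l)%N -> (j < n l)%N by rewrite nl ltnS.
rewrite entry_mul [X in index_iota 0 X]nl big_nat_recr //= entry_add entry_mul.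
rewrite entry_aug lt_nl // andbT y1 mulr1 ni.
have [hi|hi] /= := boolP (i < d l.+1)%N.
  rewrite /aug_entry hi ltnn; congr (_ + _); apply: eq_big_nat => j /andP[_ hj].
  by rewrite entry_aug ni hi lt_nl ?(ltnW hj) // /aug_entry hi hj yz.
case: ifP => last_l; last first.
  by rewrite big1_seq ?add0r // => j _; rewrite entry_aug ni (negbTE hi) last_l mul0r.
rewrite /aug_entry (negbTE hi) eqxx big1_seq ?add0r // => j.
rewrite mem_index_iota => /andP[_ hj].
by rewrite entry_aug ni (negbTE hi) last_l /aug_entry (negbTE hi) (ltn_eqF hj) if_same mul0r.
Qed.

Lemma aug_preE W b (y : 'cV[R]_(n 0)) (x : 'cV[R]_(d 0)) :
  (forall j, (j < d 0)%N -> entry y j 0 = entry x j 0) -> entry y (d 0) 0 = 1 ->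
  forall k, (k < L)%N -> forall i,
  entry (hpre r (aug_weights L W b) y k) i 0 =
    if (i < d k.+1)%N then entry (pre r W b x k) i 0
    else if (i == d k.+1) && (k.+1 < L)%N then 1 else 0.
Proof.
move=> yx y1; elim=> [|k IH] hk i /=; first exact: aug_layerE.
rewrite (aug_layerE _ _ hk (z := rho (r k.+1) (pre r W b x k))) //.
  by move=> j hj; rewrite !entry_rho IH ?(ltnW hk) // hj ltn_aug_dims.
by rewrite entry_rho IH ?(ltnW hk) // ltnn eqxx hk expr1n aug_dims_lt ?ltnSn.
Qed.

Lemma aug_hpnnE W b (y : 'cV[R]_(n 0)) (x : 'cV[R]_(d 0)) : (0 < L)%N ->
  (forall j, (j < d 0)%N -> entry y j 0 = entry x j 0) -> entry y (d 0) 0 = 1 ->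
  forall i j, entry (hpnn r L (aug_weights L W b) y) i j = entry (pnn r L W b x) i j.
Proof.
move=> L_gt0 yx y1 i [|j]; last by rewrite !entry_out // !negb_and orbC.
rewrite /hpnn /pnn pre0_hpre (aug_preE _ _ yx y1) ?prednK //.
rewrite (_ : (L.-1.+1 < L)%N = false) ?prednK ?ltnn // andbF.
by case: ifP => // hi; rewrite entry_out // hi.
Qed.

(* Scaling an input with nonzero constant coordinate to make that coordinate 1
   reduces the augmented hPNN to the PNN, by homogeneity. *)
Lemma aug_hpnn_eq W b W' b' : (0 < L)%N ->
  pnn r L W' b' =1 pnn r L W b ->
  hpnn r L (aug_weights L W' b') =1 hpnn r L (aug_weights L W b).
Proof.
move=> L_gt0 pnn_eq; have c0 : (d 0 < n 0)%N by rewrite aug_dims_lt.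
apply: (hpnn_eq_off_hyperplane (c := Ordinal c0)) => v vc.
set t := v _ 0 in vc; pose y := t^-1 *: v.
pose x : 'cV[R]_(d 0) := \col_i entry y i 0.
have yx j : (j < d 0)%N -> entry y j 0 = entry x j 0.
  by move=> hj; rewrite (entry_in x hj (ltn0Sn 0)) mxE.
have y1 : entry y (d 0) 0 = 1.
  by rewrite entry_scale (entry_in v c0 (ltn0Sn 0)) mulVf.
have -> : v = t *: y by rewrite scalerA divff // scale1r.
clearbody x y; rewrite !hpnnZ; congr (_ *: _); apply: entry_ext => i j.
by rewrite (aug_hpnnE _ _ _ yx y1) // (aug_hpnnE _ _ _ yx y1) // pnn_eq.
Qed.

End Augmented.

Arguments ltn_aug_dims {d L l i}.

Lemma ltn_sum_pt (I : finType) (F G : I -> nat) (x : I) :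
  (forall i, F i <= G i)%N -> (F x < G x)%N -> (\sum_i F i < \sum_i G i)%N.
Proof.
move=> FG Fx; rewrite (bigD1 x) //= [X in (_ < X)%N](bigD1 x) //= -addSn.
by rewrite leq_add // leq_sum.
Qed.

Section PermDiag.
Variable R : idomainType.

Definition nnz m n (A : 'M[R]_(m, n)) : nat :=
  (\sum_(i < m) \sum_(j < n) (A i j != 0%R : nat))%N.

Lemma perm_diag_mxE m n (A : 'M[R]_(m, n)) (s : 'S_m) (s' : 'S_n)
    (u : 'rV_m) (v : 'rV_n) i j :
  (perm_mx s *m diag_mx u *m A *m diag_mx v *m (perm_mx s')^T) i j =
  u 0 (s i) * A (s i) (s' j) * v 0 (s' j).
Proof.
rewrite tr_perm_mx -col_permE mxE -!mulmxA -row_permE mxE mul_diag_mx mxE.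
by rewrite mul_mx_diag mxE mulrA.
Qed.

Lemma perm_diag_colE m (s : 'S_m) (u : 'rV[R]_m) (v : 'cV[R]_m) i j :
  (perm_mx s *m diag_mx u *m v) i j = u 0 (s i) * v (s i) j.
Proof. by rewrite -mulmxA -row_permE mxE mul_diag_mx mxE. Qed.

Lemma perm_mx_eq1 m (s : 'S_m) : perm_mx s = 1%:M :> 'M[R]_m -> s = 1%g.
Proof.
move=> /matrixP s1; apply/permP => i; rewrite perm1.
have := s1 i (s i); rewrite !mxE eqxx.
by case: (i =P s i) => [E _|_ /eqP]; rewrite ?oner_eq0 -?E.
Qed.

Lemma nnz_perm_diag m n (A : 'M[R]_(m, n)) (P : 'M_m) (Q : 'M_n) (u : 'rV_m) (v : 'rV_n) :
  is_perm_mx P -> is_perm_mx Q -> (forall i, u 0 i != 0) -> (forall j, v 0 j != 0) ->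
  nnz (P *m diag_mx u *m A *m diag_mx v *m Q^T) = nnz A.
Proof.
move=> /is_perm_mxP[s ->] /is_perm_mxP[s' ->] u_neq0 v_neq0.
rewrite /nnz (reindex_inj (@perm_inj _ s^-1)); apply: eq_bigr => i _.
rewrite (reindex_inj (@perm_inj _ s'^-1)); apply: eq_bigr => j _.
by rewrite perm_diag_mxE !permKV !mulf_eq0 (negbTE (u_neq0 _)) (negbTE (v_neq0 _)) orbF.
Qed.

End PermDiag.

Lemma equiv_data_le (R : realType) d L (P : forall l, 'M[R]_(d l)) D l :
  equiv_data L P D -> (l <= L)%N -> is_perm_mx (P l) /\ (forall i, D l 0 i != 0).
Proof.
case=> inner P0 PL D0 DL; case: l => [|l] hl.
  by rewrite P0 D0 is_perm_mx1; split => // i; rewrite mxE oner_neq0.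
move: hl; rewrite leq_eqVlt => /orP[/eqP ->|hl]; last exact: inner.
by rewrite PL DL is_perm_mx1; split => // i; rewrite mxE oner_neq0.
Qed.

(* If row a of layer k is beta times row c, neuron a can be removed: its
   output is beta^(r_k) times that of c after the activation, so its outgoing
   weights can be added (scaled) to those of c.  This lowers the number of
   nonzero weights of layer k, which no equivalent representation can do. *)
Section ProportionalRows.
Variable R : realType.
Variables (d r : nat -> nat) (L : nat) (W : forall l, 'M[R]_(d l.+1, d l)).
Variables (k a c : nat) (beta : R).
Hypotheses (a_neq_c : a != c) (lt_a : (a < d k.+1)%N) (lt_c : (c < d k.+1)%N).
Hypothesis row_a : forall j, entry (W k) a j = beta * entry (W k) c j.

Definition merged_entry l i j : R :=
  if l == k then (if i == a then 0 else entry (W l) i j)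
  else if l == k.+1 then
    (if j == a then 0
     else if j == c then entry (W l) i c + beta ^+ r k.+1 * entry (W l) i a
     else entry (W l) i j)
  else entry (W l) i j.

Definition Wmerged l : 'M[R]_(d l.+1, d l) := \matrix_(i, j) merged_entry l i j.

Lemma entry_Wmerged l i j : entry (Wmerged l) i j = merged_entry l i j.
Proof.
rewrite (entry_mx (G := merged_entry l)) //; case: ifP => // out; rewrite /merged_entry.
case: eqP => [_|_]; first by case: eqP => // _; rewrite entry_out ?out.
case: eqP => [El|_]; last by rewrite entry_out ?out.
subst l; case: eqP => // _; case: eqP => [Ej|_]; last by rewrite entry_out ?out.
subst j; move: out; rewrite lt_c andbT => out.
by rewrite !entry_out ?mulr0 ?addr0 // negb_and out.
Qed.

Lemma Wmerged_other l : l != k -> l != k.+1 -> Wmerged l = W l.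
Proof.
move=> ne_k ne_k1; apply: entry_ext => i j.
by rewrite entry_Wmerged /merged_entry (negbTE ne_k) (negbTE ne_k1).
Qed.

Definition layer_input (V : forall l, 'M[R]_(d l.+1, d l)) (x : 'cV[R]_(d 0)) m
    : 'cV[R]_(d m) :=
  if m is m'.+1 then rho (r m) (hpre r V x m') else x.

Lemma hpre_input (V : forall l, 'M[R]_(d l.+1, d l)) x m :
  hpre r V x m = V m *m layer_input V x m.
Proof. by case: m. Qed.

Section Input.
Variable x : 'cV[R]_(d 0).

Lemma input_Wmerged_le m : (m <= k)%N -> layer_input Wmerged x m = layer_input W x m.
Proof.
elim: m => [//|m IH] hm /=.
by rewrite !hpre_input IH ?(ltnW hm) // Wmerged_other // ?ltn_eqF // (ltn_trans hm).
Qed.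

Lemma entry_hpre_Wmerged i : entry (hpre r Wmerged x k) i 0 =
  if i == a then 0 else entry (hpre r W x k) i 0.
Proof.
rewrite !hpre_input input_Wmerged_le // !entry_mul; case: eqP => [->|ne].
  by rewrite big1_seq // => j _; rewrite entry_Wmerged /merged_entry !eqxx mul0r.
by apply: eq_bigr => j _; rewrite entry_Wmerged /merged_entry eqxx; case: eqP.
Qed.

Lemma entry_hpre_row_a : entry (hpre r W x k) a 0 = beta * entry (hpre r W x k) c 0.
Proof.
by rewrite !hpre_input !entry_mul mulr_sumr; apply: eq_bigr => j _; rewrite row_a mulrA.
Qed.

Lemma hpre_Wmerged_next : hpre r Wmerged x k.+1 = hpre r W x k.+1.
Proof.
apply: entry_ext => i [|j]; last by rewrite !entry_out // !negb_and orbC.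
rewrite !hpre_input /= !entry_mul.
set y := fun j => entry (rho (r k.+1) (hpre r W x k)) j 0.
set X := entry (W k.+1) i a * y a.
have y_ne_a j : j != a -> entry (rho (r k.+1) (hpre r Wmerged x k)) j 0 = y j.
  by move=> ne_a; rewrite /y !entry_rho entry_hpre_Wmerged (negbTE ne_a).
have y_a : y a = beta ^+ r k.+1 * y c.
  by rewrite /y !entry_rho lt_a lt_c entry_hpre_row_a exprMn.
transitivity (\sum_(0 <= j < d k.+1)
   (entry (W k.+1) i j * y j - (if j == a then X else 0) + (if j == c then X else 0))).
  apply: eq_big_seq => j _; rewrite entry_Wmerged /merged_entry (gtn_eqF (ltnSn k)) eqxx.
  case: eqP => [->|/eqP ne_a]; first by rewrite (negbTE a_neq_c) mul0r subrr addr0.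
  rewrite y_ne_a // subr0.
  case: eqP => [->|_]; last by rewrite addr0.
  by rewrite /X y_a mulrDl mulrCA mulrA.
rewrite !big_split /= sumrN -!big_mkcond !big_nat1_eq /= lt_a lt_c.
by rewrite subrK.
Qed.

Lemma hpre_Wmerged_gt m : (k < m)%N -> hpre r Wmerged x m = hpre r W x m.
Proof.
elim: m => [//|m IH] hm; have [->|ne] := eqVneq m k; first exact: hpre_Wmerged_next.
have lt_km : (k < m)%N by rewrite ltn_neqAle eq_sym ne -ltnS.
by rewrite /= IH // Wmerged_other // gtn_eqF // ltnW.
Qed.

End Input.

Lemma hpnn_unique_proportional_row_eq0 : hpnn_unique r L W -> (k.+1 < L)%N ->
  forall j, entry (W k) a j = 0.
Proof.
move=> W_uniq lt_k1L j0; apply/eqP/contraT => Wa_neq0.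
have lt_kL : (k < L)%N by rewrite ltnW.
have [P [D [PD Wrel]]] : hpnn_equiv r L W Wmerged.
  apply: W_uniq => v; rewrite /hpnn /pnn !pre0_hpre hpre_Wmerged_gt //.
  by rewrite -ltnS prednK // (leq_ltn_trans _ lt_kL).
have [P1 D1] := equiv_data_le PD lt_kL.
have [P0 D0] := equiv_data_le PD (ltnW lt_kL).
have nnz_eq : nnz (Wmerged k) = nnz (W k).
  rewrite Wrel // nnz_perm_diag // => i.
  by rewrite mxE invr_eq0 expf_eq0 negb_and D0 orbT.
have lt_j0 : (j0 < d k)%N.
  by apply: contraNT Wa_neq0 => hj; rewrite entry_out // negb_and hj orbT.
suff : (nnz (Wmerged k) < nnz (W k))%N by rewrite nnz_eq ltnn.
apply: (ltn_sum_pt (x := Ordinal lt_a)) => [i|].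
  apply: leq_sum => j _; rewrite -!entryE entry_Wmerged /merged_entry eqxx.
  by case: (_ == a); rewrite ?eqxx.
apply: (ltn_sum_pt (x := Ordinal lt_j0)) => [j|];
  by rewrite -!entryE entry_Wmerged /merged_entry !eqxx //= Wa_neq0.
Qed.

End ProportionalRows.

Lemma perm_restr_ex m (f : nat -> nat) :
  (forall i, (i < m)%N -> (f i < m)%N) -> {in gtn m &, injective f} ->
  exists s : 'S_m, forall i : 'I_m, val (s i) = f i.
Proof.
move=> f_lt f_inj; pose g (i : 'I_m) := Ordinal (f_lt _ (ltn_ord i)).
have g_inj : injective g.
  by move=> i j /(congr1 val) /= /f_inj E; apply/val_inj/E; rewrite inE.
by exists (perm g_inj) => i; rewrite permE.
Qed.

Section AugmentedEquivalence.
Variable R : realType.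
Variables (d r : nat -> nat) (L : nat).
Variables (W W' : forall l, 'M[R]_(d l.+1, d l)) (b b' : forall l, 'cV[R]_(d l.+1)).
Variables (P : forall l, 'M[R]_(aug_dims d L l)) (D : forall l, 'rV[R]_(aug_dims d L l)).
Hypothesis W_uniq : hpnn_unique r L (aug_weights L W b).
Hypothesis PD : equiv_data L P D.
Hypothesis Wrel : weights_rel r L P D (aug_weights L W b) (aug_weights L W' b').

Local Notation n := (aug_dims d L).
Local Notation Wt := (aug_weights L W b).
Local Notation Wt' := (aug_weights L W' b').

Definition perm_of l : 'S_(n l) := odflt 1%g [pick s | P l == perm_mx s].

Lemma perm_ofE l : (l <= L)%N -> P l = perm_mx (perm_of l).
Proof.
move=> hl; have [/is_perm_mxP[s Ps] _] := equiv_data_le PD hl.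
rewrite /perm_of; case: pickP => [s' /eqP //|none].
by have := none s; rewrite Ps eqxx.
Qed.

Definition sigma l (i : nat) : nat :=
  if @insub _ (fun k => (k < n l)%N) 'I_(n l) i is Some o then perm_of l o else i.

Lemma sigmaE l (o : 'I_(n l)) : sigma l o = perm_of l o.
Proof. by rewrite /sigma valK. Qed.

Lemma sigma_lt l i : (i < n l)%N -> (sigma l i < n l)%N.
Proof. by move=> hi; rewrite -[i]/(val (Ordinal hi)) sigmaE. Qed.

Lemma sigma_inj l : {in gtn (n l) &, injective (sigma l)}.
Proof.
move=> i j hi hj; rewrite -[i]/(val (Ordinal hi)) -[j]/(val (Ordinal hj)) !sigmaE.
by move/val_inj/perm_inj => ->.
Qed.

Lemma sigma_surj l j' : (j' < n l)%N -> exists2 j, (j < n l)%N & sigma l j = j'.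
Proof.
move=> hj'; exists ((perm_of l)^-1%g (Ordinal hj')); first exact: ltn_ord.
by rewrite sigmaE permKV.
Qed.

Lemma sigma_id l : (l <= L)%N -> P l = 1%:M -> sigma l =1 id.
Proof.
move=> hl Pl1 i; rewrite /sigma; case: insubP => // o _ <-.
by rewrite (perm_mx_eq1 (etrans (esym (perm_ofE hl)) Pl1)) perm1.
Qed.

Definition scale l i := entry (D l) 0 i.

Lemma scale_neq0 l i : (l <= L)%N -> (i < n l)%N -> scale l i != 0.
Proof.
move=> hl hi; have [_ D_neq0] := equiv_data_le PD hl.
by rewrite /scale (entry_in _ (ltn0Sn 0) hi) D_neq0.
Qed.

Lemma scale1 l i : D l = const_mx 1 -> (i < n l)%N -> scale l i = 1.
Proof. by move=> Dl1 hi; rewrite /scale (entry_in _ (ltn0Sn 0) hi) Dl1 mxE. Qed.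

Lemma entry_Wrel l i j : (l < L)%N -> (i < n l.+1)%N -> (j < n l)%N ->
  entry (Wt' l) i j = scale l.+1 (sigma l.+1 i) *
    entry (Wt l) (sigma l.+1 i) (sigma l j) * (scale l (sigma l j)) ^- r l.
Proof.
move=> hl hi hj; rewrite -[i]/(val (Ordinal hi)) -[j]/(val (Ordinal hj)) entryE Wrel //.
rewrite (perm_ofE (l := l.+1)) // (perm_ofE (l := l)) ?(ltnW hl) //.
rewrite perm_diag_mxE !sigmaE /scale -[0%N]/(val (@ord0 0)) !entryE.
by congr (_ * _); rewrite mxE.
Qed.

Lemma bias_neuron_fixed l : (l < L)%N -> sigma l (d l) = d l /\ scale l (d l) = 1.
Proof.
elim: l => [|l IH] hl.
  have [_ P0 _ D0 _] := PD.
  by rewrite sigma_id // scale1 // aug_dims_lt.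
have [sigma_d scale_d] := IH (ltnW hl).
set c := d l.+1; have lt_c : (c < n l.+1)%N by rewrite aug_dims_lt.
have lt_dl : (d l < n l)%N by rewrite aug_dims_lt // ltnW.
set a := sigma l.+1 c; have lt_a : (a < n l.+1)%N := sigma_lt lt_c.
have row_c j : entry (Wt l) c j = if j == d l then 1 else 0.
  rewrite entry_aug lt_c /aug_entry ltnn /=.
  by case: eqP => [->|_]; rewrite ?lt_dl ?if_same.
have row_c' j : (j < n l)%N -> entry (Wt' l) c j = if j == d l then 1 else 0.
  by move=> hj; rewrite entry_aug lt_c hj /aug_entry ltnn.
have scale_a : scale l.+1 a != 0 by apply: scale_neq0 (ltnW hl) lt_a.
set beta := entry (Wt l) a (d l).
have beta_eq : scale l.+1 a * beta = 1.
  have := entry_Wrel (ltnW hl) lt_c lt_dl.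
  by rewrite row_c' // eqxx sigma_d scale_d expr1n invr1 mulr1.
have row_a j : entry (Wt l) a j = beta * entry (Wt l) c j.
  rewrite row_c; case: eqP => [->|/eqP ne]; first by rewrite mulr1.
  rewrite mulr0; have [hj|hj] := ltnP j (n l); last first.
    by rewrite entry_out // negb_and (ltnNge j) hj orbT.
  have [i hi ji] := sigma_surj hj; rewrite -ji in ne *.
  have := entry_Wrel (ltnW hl) lt_c hi; rewrite row_c' //.
  have -> : (i == d l) = false by apply: contraNF ne => /eqP ->; rewrite sigma_d.
  move/esym/eqP; rewrite !mulf_eq0 (negbTE scale_a) invr_eq0 expf_eq0.
  by rewrite (negbTE (scale_neq0 (ltnW (ltnW hl)) (sigma_lt hi))) andbF orbF => /eqP.
have a_eq_c : a = c.
  apply/eqP/contraT => a_neq_c.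
  have := hpnn_unique_proportional_row_eq0 a_neq_c lt_a lt_c row_a W_uniq hl (d l).
  by move=> beta0; move: beta_eq; rewrite /beta beta0 mulr0 => /esym/eqP; rewrite oner_eq0.
by split; rewrite -/c -a_eq_c // -beta_eq /beta a_eq_c row_c eqxx mulr1.
Qed.

Lemma sigma_lt_d l i : (l <= L)%N -> (i < d l)%N -> (sigma l i < d l)%N.
Proof.
rewrite leq_eqVlt => /orP[/eqP ->|hl] hi.
  by have [_ _ PL _ _] := PD; rewrite sigma_id.
have := sigma_lt (ltn_aug_dims hi); rewrite aug_dims_lt // ltnS leq_eqVlt.
case/orP => [/eqP sigma_i|//]; have [sigma_d _] := bias_neuron_fixed hl.
have := @sigma_inj l i (d l); rewrite !inE ltn_aug_dims // aug_dims_lt // ltnSn.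
by rewrite sigma_i sigma_d => /(_ isT isT erefl) E; rewrite E ltnn in hi.
Qed.

Definition sigma_restr l : 'S_(d l) :=
  odflt 1%g [pick s : 'S_(d l) | [forall i, val (s i) == sigma l i]].

Lemma sigma_restrE l (i : 'I_(d l)) : (l <= L)%N -> val (sigma_restr l i) = sigma l i.
Proof.
move=> hl.
have [|s sE] := @perm_restr_ex (d l) (sigma l) (fun i => @sigma_lt_d l i hl).
  by move=> i' j' hi hj; apply: sigma_inj; rewrite inE ltn_aug_dims.
rewrite /sigma_restr; case: pickP => [s' /forallP/(_ i)/eqP //|none].
by have /forallP[] := negbT (none s) => j; rewrite sE.
Qed.

Lemma sigma_restr1 l : (l <= L)%N -> P l = 1%:M -> sigma_restr l = 1%g.
Proof.
by move=> hl Pl1; apply/permP => i; apply/val_inj; rewrite sigma_restrE // perm1 sigma_id.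
Qed.

Lemma pnn_equiv_of_aug : pnn_equiv r L W b W' b'.
Proof.
have [_ P0 PL D0 DL] := PD.
exists (fun l => perm_mx (sigma_restr l)), (fun l => \row_(i < d l) scale l i); split.
- split=> [l /andP[_ hl]||||].
  + split=> [|i]; first exact: perm_mx_is_perm.
    by rewrite mxE scale_neq0 // ?ltn_aug_dims // ltnW.
  + by rewrite sigma_restr1 // perm_mx1.
  + by rewrite sigma_restr1 // perm_mx1.
  + by apply/matrixP => i j; rewrite !mxE scale1 // ltn_aug_dims.
  + by apply/matrixP => i j; rewrite !mxE scale1 // ltn_aug_dims.
- move=> l hl; apply/matrixP => i j; rewrite perm_diag_mxE !mxE -[W' l i j]entryE.
  rewrite -(entry_aug_weights L W' b') //.
  rewrite (entry_Wrel hl (ltn_aug_dims (ltn_ord i)) (ltn_aug_dims (ltn_ord j))).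
  have le_lL := ltnW hl.
  by rewrite -entryE !sigma_restrE // entry_aug_weights // sigma_lt_d.
- move=> l hl; apply/matrixP => i j; rewrite perm_diag_colE mxE ord1 -[b' l i 0]entryE.
  have [sigma_d scale_d] := bias_neuron_fixed hl.
  have lt_dl : (d l < n l)%N by rewrite aug_dims_lt.
  rewrite -(entry_aug_bias (L := L) W' b') //.
  rewrite (entry_Wrel hl (ltn_aug_dims (ltn_ord i)) lt_dl).
  rewrite sigma_d scale_d expr1n invr1 mulr1 -entryE sigma_restrE //.
  by rewrite entry_aug_bias // sigma_lt_d.
Qed.

End AugmentedEquivalence.

Theorem mainTheorem17 (R : realType) (d r : nat -> nat) (L : nat) (hL : (0 < L)%N)
  (W : forall l, 'M[R]_(d l.+1, d l)) (b : forall l, 'cV[R]_(d l.+1)) :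
  hpnn_unique r L (aug_weights L W b) -> pnn_unique r L W b.
Proof.
move=> W_uniq W' b' pnn_eq.
have [P [D [PD Wrel]]] := W_uniq _ (aug_hpnn_eq hL pnn_eq).
exact: pnn_equiv_of_aug W_uniq PD Wrel.
Qed.
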